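(* Let $N\ge 1$, let $a_1,\dots,a_N>0$, $T_1,\dots,T_N\ge 0$ and $P_{\mathrm{tot}}>0$. For $P_i\ge 0$ let $r_i(P_i)=\log_2(1+a_iP_i)$, $J(\mathbf P)=\sum_{i=1}^N (r_i(P_i)-T_i)^2$, and $\bar P_i=(2^{T_i}-1)/a_i$. Consider the problem (P): minimize $J(\mathbf P)$ subject to $\sum_i P_i\le P_{\mathrm{tot}}$ and $P_i\ge 0$ for all $i$; let $J^*$ denote its optimal value. Let $c=\ln 2$. Say that $\lambda\ge 0$ is a KKT multiplier for the sum-power constraint at a feasible $\mathbf P$ if there exist $\mu_1,\dots,\mu_N\ge 0$ with $2(r_i(P_i)-T_i)\frac{a_i}{(1+a_iP_i)c}+\lambda-\mu_i=0$ and $\mu_iP_i=0$ for all $i$, and $\lambda(\sum_i P_i-P_{\mathrm{tot}})=0$. Then: (A) If $P_{\mathrm{tot}}\ge \sum_{i=1}^N \bar P_i$, then the optimal solution is $P_i^*=\bar P_i$ for all $i$, $J^*=0$, and $\sum_i P_i^*=\sum_i\bar P_i\le P_{\mathrm{tot}}$ (with strict inequality, i.e. the power constraint slack, whenever $P_{\mathrm{tot}}>\sum_i\bar P_i$). (B) If $P_{\mathrm{tot}}<\sum_{i=1}^N\bar P_i$, then every optimal solution $\mathbf P^*$ satisfies $\sum_i P_i^*=P_{\mathrm{tot}}$, $J^*>0$, and every KKT multiplier $\lambda^*$ for the sum-power constraint at $\mathbf P^*$ satisfies $\lambda^*>0$.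
   Context: The problem restricted to the domain $0\le P_i\le \bar P_i$ is a convex program with linear constraints satisfying Slater's condition, so the KKT conditions above characterize optimal solutions. *)

From HB Require Import structures.
From mathcomp Require Import all_boot all_order all_algebra.
From mathcomp Require Import all_classical all_reals all_analysis.
Set Implicit Arguments. Unset Strict Implicit. Unset Printing Implicit Defensive.
Import Order.TTheory GRing.Theory Num.Theory.
Local Open Scope ring_scope.
Local Open Scope classical_set_scope.

Section Defs.
Variables (R : realType) (N : nat).

Definition rate (a P : 'I_N -> R) (i : 'I_N) : R :=
  ln (1 + a i * P i) / ln 2.

Definition Jobj (a T P : 'I_N -> R) : R :=
  \sum_(i < N) (rate a P i - T i) ^+ 2.

Definition Pbar (a T : 'I_N -> R) (i : 'I_N) : R :=
  (2 `^ T i - 1) / a i.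

Definition feasible (Ptot : R) (P : 'I_N -> R) : Prop :=
  (forall i, 0 <= P i) /\ \sum_(i < N) P i <= Ptot.

Definition Jstar (a T : 'I_N -> R) (Ptot : R) : R :=
  inf [set Jobj a T P | P in feasible Ptot].

Definition optimal (a T : 'I_N -> R) (Ptot : R) (P : 'I_N -> R) : Prop :=
  feasible Ptot P /\ forall Q, feasible Ptot Q -> Jobj a T P <= Jobj a T Q.

Definition KKT_multiplier (a T : 'I_N -> R) (Ptot : R) (P : 'I_N -> R)
    (lam : R) : Prop :=
  0 <= lam /\
  exists mu : 'I_N -> R,
    (forall i, 0 <= mu i) /\
    (forall i, 2 * (rate a P i - T i) * (a i / ((1 + a i * P i) * ln 2))
               + lam - mu i = 0) /\
    (forall i, mu i * P i = 0) /\
    lam * (\sum_(i < N) P i - Ptot) = 0.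

End Defs.

From HB Require Import structures.
From mathcomp Require Import all_boot all_order all_algebra.
From mathcomp Require Import all_classical all_reals all_analysis.
From mathcomp Require Import ring lra.
Set Implicit Arguments.
Unset Strict Implicit.
Unset Printing Implicit Defensive.
Import Order.TTheory GRing.Theory Num.Theory.
Local Open Scope ring_scope.

(* Each rate r_i is strictly increasing in P_i and equals T_i exactly at
   Pbar_i.  If Pbar is affordable it attains J = 0, and any zero of J has
   r_i = T_i for every i, hence is Pbar.  Otherwise every feasible P has a
   user with P_i < Pbar_i, i.e. r_i < T_i: spending unused power on that user
   strictly lowers J, and its stationarity equation forces lambda > 0.  For a
   lower bound on J uniform over the feasible set, note that some user even
   has P_i < Pbar_i - delta with delta = (sum Pbar - Ptot)/(N + 1), so
   (r_i - T_i)^2 is at least the least of the finitely many positive numbers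
   (T_j - r_j(Pbar_j - delta))^2 over the j with delta <= Pbar_j. *)

Lemma exists_lt_of_sum_lt (R : realDomainType) (I : finType) (F G : I -> R) :
  \sum_i F i < \sum_i G i -> exists i, F i < G i.
Proof.
move=> ltFG; apply/not_existsP => /= noltFG.
suff : \sum_i G i <= \sum_i F i by rewrite leNgt ltFG.
apply: ler_sum => i _; rewrite leNgt; apply/negP => ltFGi.
exact: noltFG ltFGi.
Qed.

Section Rate.
Variables (R : realType) (N : nat) (a : 'I_N -> R).
Implicit Types (P Q T : 'I_N -> R) (i : 'I_N).

Lemma ln2_gt0 : 0 < ln (2 : R).
Proof. by apply: ln_gt0; lra. Qed.

Lemma rate_lt P Q i : 0 < a i -> 0 <= P i -> 0 <= Q i ->
  (rate a P i < rate a Q i) = (P i < Q i).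
Proof.
move=> ai_gt0 P_ge0 Q_ge0.
have P1_gt0 : 0 < 1 + a i * P i by rewrite ltr_wpDr // mulr_ge0 // ltW.
have Q1_gt0 : 0 < 1 + a i * Q i by rewrite ltr_wpDr // mulr_ge0 // ltW.
rewrite /rate ltr_pM2r ?invr_gt0 ?ln2_gt0 // ltr_ln ?posrE //.
by rewrite ltrD2l ltr_pM2l.
Qed.

Lemma rate_le P Q i : 0 < a i -> 0 <= P i -> 0 <= Q i ->
  (rate a P i <= rate a Q i) = (P i <= Q i).
Proof. by move=> ai_gt0 P_ge0 Q_ge0; rewrite !leNgt rate_lt. Qed.

Lemma rate_inj P Q i : 0 < a i -> 0 <= P i -> 0 <= Q i ->
  rate a P i = rate a Q i -> P i = Q i.
Proof.
move=> ai_gt0 P_ge0 Q_ge0 eqPQ; apply: le_anti.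
rewrite -(rate_le ai_gt0 P_ge0 Q_ge0) -(rate_le ai_gt0 Q_ge0 P_ge0).
by rewrite eqPQ lexx.
Qed.

Lemma rate_Pbar T i : 0 < a i -> rate a (Pbar a T) i = T i.
Proof.
move=> ai_gt0; rewrite /rate /Pbar mulrCA divff ?gt_eqF // mulr1 addrC subrK.
by rewrite ln_powR mulfK // gt_eqF // ln2_gt0.
Qed.

Lemma Pbar_ge0 T i : 0 < a i -> 0 <= T i -> 0 <= Pbar a T i.
Proof.
move=> ai_gt0 Ti_ge0; apply: divr_ge0; last exact: ltW.
by rewrite subr_ge0 -[leLHS](powRr0 (2 : R)); apply: ler_powR; rewrite ?ler1n.
Qed.

End Rate.

Section Objective.
Variables (R : realType) (N : nat) (a T : 'I_N -> R) (Ptot : R).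
Hypotheses (a_gt0 : forall i, 0 < a i) (T_ge0 : forall i, 0 <= T i).
Implicit Types (P Q : 'I_N -> R) (i : 'I_N).

Lemma Jobj_ge0 P : 0 <= Jobj a T P.
Proof. by apply: sumr_ge0 => i _; apply: sqr_ge0. Qed.

Lemma sqr_rate_le_Jobj P i : (rate a P i - T i) ^+ 2 <= Jobj a T P.
Proof.
rewrite /Jobj (bigD1 i) //= lerDl.
by apply: sumr_ge0 => j _; apply: sqr_ge0.
Qed.

Lemma Jobj_Pbar : Jobj a T (Pbar a T) = 0.
Proof. by apply: big1 => i _; rewrite rate_Pbar // subrr expr0n. Qed.

Lemma Jobj_eq0 P : (forall i, 0 <= P i) -> Jobj a T P = 0 -> P = Pbar a T.
Proof.
move=> P_ge0 /eqP; rewrite psumr_eq0 => [/allP J0|i _]; last exact: sqr_ge0.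
apply: funext => i.
apply: (rate_inj (a_gt0 i) (P_ge0 i) (Pbar_ge0 (a_gt0 i) (T_ge0 i))).
have /implyP/(_ isT) := J0 i (mem_index_enum i).
by rewrite sqrf_eq0 subr_eq0 rate_Pbar // => /eqP.
Qed.

Lemma Jstar_optimal P : optimal a T Ptot P -> Jstar a T Ptot = Jobj a T P.
Proof.
move=> [feasP optP]; apply: le_anti; apply/andP; split.
  apply: ge_inf; last by exists P.
  by exists 0 => _ [Q _ <-]; apply: Jobj_ge0.
apply: lb_le_inf => [|_ [Q feasQ <-]]; last exact: optP.
by exists (Jobj a T P), P.
Qed.

End Objective.

Section Shortage.
Variables (R : realType) (N : nat) (a T : 'I_N -> R) (Ptot : R).
Hypotheses (a_gt0 : forall i, 0 < a i) (T_ge0 : forall i, 0 <= T i).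
Implicit Types (P Q : 'I_N -> R) (i : 'I_N).

Lemma Jobj_decrease P i : feasible Ptot P -> \sum_j P j < Ptot ->
  P i < Pbar a T i -> exists2 Q, feasible Ptot Q & Jobj a T Q < Jobj a T P.
Proof.
move=> [P_ge0 _] sumP_lt Pi_lt.
pose d := Num.min (Pbar a T i - P i) (Ptot - \sum_j P j).
have d_gt0 : 0 < d by rewrite lt_min !subr_gt0 Pi_lt sumP_lt.
have d_le_Pbar : d <= Pbar a T i - P i by rewrite ge_min lexx.
have d_le_Ptot : d <= Ptot - \sum_j P j by rewrite ge_min lexx orbT.
pose Q j := P j + (j == i)%:R * d.
have Qi : Q i = P i + d by rewrite /Q eqxx mul1r.
have Q_ge0 j : 0 <= Q j by rewrite /Q addr_ge0 // mulr_ge0 // ltW.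
have sumQ : \sum_j Q j = \sum_j P j + d.
  rewrite big_split /=; congr (_ + _).
  rewrite (bigD1 i) //= eqxx mul1r big1 ?addr0 // => j /negbTE->.
  exact: mul0r.
exists Q; first by split=> //; rewrite sumQ; lra.
have rate_lt_Q : rate a P i < rate a Q i by rewrite rate_lt // Qi ltrDl.
have rateQ_le_T : rate a Q i <= T i.
  by rewrite -(rate_Pbar T (a_gt0 i)) rate_le ?Pbar_ge0 // Qi; lra.
rewrite /Jobj (bigD1 i) //= [ltRHS](bigD1 i) //=.
under eq_bigr => j /negbTE ji do rewrite /rate /Q ji mul0r addr0.
rewrite ltrD2r; nra.
Qed.

Lemma KKT_multiplier_gt0 P lam i : feasible Ptot P -> P i < Pbar a T i ->
  KKT_multiplier a T Ptot P lam -> 0 < lam.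
Proof.
move=> [P_ge0 _] Pi_lt [_ [mu [mu_ge0 [stationary _]]]].
have rate_lt_T : rate a P i < T i.
  by rewrite -(rate_Pbar T (a_gt0 i)) rate_lt ?Pbar_ge0.
have := stationary i; set c := a i / _ => stationary_i.
have c_gt0 : 0 < c.
  apply: divr_gt0 => //; apply: mulr_gt0; last exact: ln2_gt0.
  by rewrite ltr_wpDr // mulr_ge0 // ltW.
have -> : lam = mu i + 2 * (T i - rate a P i) * c.
  by apply/eqP; rewrite -subr_eq0 -stationary_i; apply/eqP; ring.
by rewrite ltr_wpDl ?mu_ge0 // mulr_gt0 // mulr_gt0 // subr_gt0.
Qed.

Hypothesis short : Ptot < \sum_i Pbar a T i.

Lemma feasible_exists_lt_Pbar P : feasible Ptot P -> exists i, P i < Pbar a T i.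
Proof.
by move=> [_ sumP_le]; apply: exists_lt_of_sum_lt (le_lt_trans sumP_le short).
Qed.

Lemma optimal_sum_eq P : optimal a T Ptot P -> \sum_i P i = Ptot.
Proof.
move=> [feasP optP]; apply: le_anti; rewrite feasP.2 /= leNgt; apply/negP.
move=> sumP_lt; have [i Pi_lt] := feasible_exists_lt_Pbar feasP.
have [Q /optP JPQ JQP] := Jobj_decrease feasP sumP_lt Pi_lt.
by move: JQP; rewrite ltNge JPQ.
Qed.

Lemma Jobj_feasible_lbound :
  exists2 m : R, 0 < m & forall P, feasible Ptot P -> m <= Jobj a T P.
Proof.
pose delta := (\sum_i Pbar a T i - Ptot) / N.+1%:R.
have delta_gt0 : 0 < delta by rewrite divr_gt0 // subr_gt0.
pose Pd j := Pbar a T j - delta.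
have Ptot_lt_Pd : Ptot < \sum_i Pd i.
  have Ndelta : delta *+ N.+1 = \sum_i Pbar a T i - Ptot.
    by rewrite -mulr_natr divfK // pnatr_eq0.
  by rewrite sumrB sumr_const card_ord; move: Ndelta; rewrite mulrS; lra.
have rate_Pd_lt i : delta <= Pbar a T i -> rate a Pd i < T i.
  move=> delta_le; rewrite -(rate_Pbar T (a_gt0 i)) rate_lt ?Pbar_ge0 //.
    by rewrite ltrBlDr ltrDl.
  by rewrite subr_ge0.
exists (\big[Num.min/1]_(i | delta <= Pbar a T i) (T i - rate a Pd i) ^+ 2).
  apply: lt_bigmin => // i /rate_Pd_lt ?.
  by rewrite exprn_gt0 // subr_gt0.
move=> P [P_ge0 sumP_le].
have [i Pi_lt] := exists_lt_of_sum_lt (le_lt_trans sumP_le Ptot_lt_Pd).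
have delta_le : delta <= Pbar a T i.
  by have := P_ge0 i; rewrite /Pd in Pi_lt; lra.
apply: le_trans (bigmin_le_cond _ _ delta_le) _.
apply: le_trans (sqr_rate_le_Jobj a T P i).
have : rate a P i < rate a Pd i by rewrite rate_lt // subr_ge0.
have := rate_Pd_lt i delta_le; nra.
Qed.

Lemma Jstar_gt0 : 0 <= Ptot -> 0 < Jstar a T Ptot.
Proof.
move=> Ptot_ge0; have [m m_gt0 m_le] := Jobj_feasible_lbound.
apply: lt_le_trans m_gt0 _.
apply: lb_le_inf => [|_ [P feasP <-]]; last exact: m_le.
by exists (Jobj a T (fun=> 0)), (fun=> 0); split=> //; rewrite big1.
Qed.

End Shortage.

Theorem theorem2 (R : realType) (N : nat) (a T : 'I_N -> R) (Ptot : R) :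
  (0 < N)%N ->
  (forall i, 0 < a i) ->
  (forall i, 0 <= T i) ->
  0 < Ptot ->
  (* (A) *)
  (\sum_(i < N) Pbar a T i <= Ptot ->
     optimal a T Ptot (Pbar a T) /\
     (forall P, optimal a T Ptot P -> P = Pbar a T) /\
     Jstar a T Ptot = 0 /\
     \sum_(i < N) Pbar a T i <= Ptot /\
     (\sum_(i < N) Pbar a T i < Ptot -> \sum_(i < N) Pbar a T i < Ptot)) /\
  (* (B) *)
  (Ptot < \sum_(i < N) Pbar a T i ->
     (forall P, optimal a T Ptot P -> \sum_(i < N) P i = Ptot) /\
     0 < Jstar a T Ptot /\
     (forall P lam, optimal a T Ptot P -> KKT_multiplier a T Ptot P lam ->
        0 < lam)).
Proof.
move=> _ a_gt0 T_ge0 Ptot_gt0; split=> [affordable | short].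
  have feasPbar : feasible Ptot (Pbar a T).
    by split=> // i; exact: Pbar_ge0 (a_gt0 i) (T_ge0 i).
  have optPbar : optimal a T Ptot (Pbar a T).
    by split=> // Q _; rewrite Jobj_Pbar // Jobj_ge0.
  split=> //; split.
    move=> P [[P_ge0 _] optP]; apply: Jobj_eq0 => //.
    by apply/eqP; rewrite eq_le Jobj_ge0 andbT -(Jobj_Pbar T a_gt0) optP.
  by rewrite (Jstar_optimal optPbar) Jobj_Pbar.
split; first exact: optimal_sum_eq.
split; first by apply: Jstar_gt0 => //; exact: ltW.
move=> P lam [feasP _]; have [i Pi_lt] := feasible_exists_lt_Pbar short feasP.
exact: KKT_multiplier_gt0 Pi_lt.
Qed.
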